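(* Let $D,Q,P$ be simplicial abelian groups and $s\colon D\to P$, $f\colon Q\to P$ simplicial homomorphisms. Suppose $D$ is free and $m$-connected ($m\in\mathbb N$) and $f$ is surjective. Then there exists a simplicial homomorphism $t\colon D\to Q$ such that $f\circ t|_{D_{(m)}}=s|_{D_{(m)}}$.
   Context: A simplicial abelian group $D$ is free if each $D_q$ is a free abelian group. $D_{(m)}\subset D$ denotes the $m$-skeleton (the simplicial subset generated by simplices of dimension $\le m$). *)

From HB Require Import structures.
From mathcomp Require Import all_boot all_order all_algebra.
Unset Printing Implicit Defensive.
Import GRing.Theory.
Local Open Scope ring_scope.

(* Indices out of range
   are junk and never constrained nor used. *)
Record sAb := SAb {
  sob :> nat -> zmodType;
  sface : forall n, nat -> sob n.+1 -> sob n;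
  sdeg : forall n, nat -> sob n -> sob n.+1;
  sface_add : forall n i, (i <= n.+1)%N ->
    forall x y : sob n.+1, sface n i (x - y) = sface n i x - sface n i y;
  sdeg_add : forall n i, (i <= n)%N ->
    forall x y : sob n, sdeg n i (x - y) = sdeg n i x - sdeg n i y;
  sface_face : forall n i j, (i < j)%N -> (j <= n.+2)%N -> forall x,
    sface n i (sface n.+1 j x) = sface n j.-1 (sface n.+1 i x);
  sdeg_deg : forall n i j, (i <= j)%N -> (j <= n)%N -> forall x,
    sdeg n.+1 i (sdeg n j x) = sdeg n.+1 j.+1 (sdeg n i x);
  sface_deg_lt : forall n i j, (i < j)%N -> (j <= n.+1)%N -> forall x,
    sface n.+1 i (sdeg n.+1 j x) = sdeg n j.-1 (sface n i x);
  sface_deg_eq : forall n j, (j <= n)%N -> forall x,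
    sface n j (sdeg n j x) = x;
  sface_deg_eqS : forall n j, (j <= n)%N -> forall x,
    sface n j.+1 (sdeg n j x) = x;
  sface_deg_gt : forall n i j, (j.+1 < i)%N -> (i <= n.+2)%N -> forall x,
    sface n.+1 i (sdeg n.+1 j x) = sdeg n j (sface n i.-1 x)
}.

Record sHom (D E : sAb) := SHom {
  hmap :> forall n, D n -> E n;
  hmap_add : forall n (x y : D n), hmap n (x - y) = hmap n x - hmap n y;
  hmap_face : forall n i, (i <= n.+1)%N -> forall x,
    hmap n (sface D n i x) = sface E n i (hmap n.+1 x);
  hmap_deg : forall n i, (i <= n)%N -> forall x,
    hmap n.+1 (sdeg D n i x) = sdeg E n i (hmap n x)
}.

Definition free_zmod (V : zmodType) : Prop :=
  exists (I : eqType) (b : I -> V),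
    (forall v : V, exists (s : seq I) (c : I -> int),
        v = \sum_(i <- s) b i *~ c i) /\
    (forall (s : seq I) (c : I -> int), uniq s ->
        \sum_(i <- s) b i *~ c i = 0 -> forall i, i \in s -> c i = 0).

Definition sfree (D : sAb) : Prop := forall q, free_zmod (D q).

(* Homotopy groups via the normalized Moore complex:
   N_n = {x in D_n | d_i x = 0 for 1 <= i <= n}, differential d_0,
   pi_n(D) = H_n(N D).  pi_n(D) = 0 means: every x in D_n with d_i x = 0 for
   all 0 <= i <= n is d_0 y for some y in D_{n+1} with d_i y = 0 for
   1 <= i <= n+1.  (For n = 0 there are no faces on D_0.) *)
Definition cycleN (D : sAb) (n : nat) (x : D n) : Prop :=
  match n return D n -> Prop with
  | 0 => fun _ => True
  | k.+1 => fun x => forall i, (i <= k.+1)%N -> sface D k i x = 0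
  end x.

Definition pi_trivial (D : sAb) (n : nat) : Prop :=
  forall x : D n, cycleN D n x ->
    exists y : D n.+1,
      (forall i, (1 <= i <= n.+1)%N -> sface D n i y = 0) /\ sface D n 0 y = x.

Definition sconnected (m : nat) (D : sAb) : Prop :=
  forall i, (i <= m)%N -> pi_trivial D i.

Definition ssurj (D E : sAb) (f : sHom D E) : Prop :=
  forall n (y : E n), exists x : D n, f n x = y.

Inductive in_skel (D : sAb) (m : nat) : forall q, D q -> Prop :=
| skel_base : forall q (x : D q), (q <= m)%N -> in_skel D m _ x
| skel_face : forall q i (x : D q.+1), (i <= q.+1)%N -> in_skel D m _ x ->
    in_skel D m _ (sface D q i x)
| skel_deg : forall q i (x : D q), (i <= q)%N -> in_skel D m _ x ->
    in_skel D m _ (sdeg D q i x).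

(* Pass to the Moore complexes N_n = (intersection of ker d_i, i >= 1) with
   differential d_0.  Since D is free and pi_k D = 0 for k <= m, lifting along
   bases yields a contracting homotopy h of N D in degrees <= m, i.e.
   d h + h d = 1; since D is free and f is onto, s lifts degreewise to additive
   maps L with f L = s.  Projecting L to the Moore complex, the chain map
   T := d (L h) + (L h) d from N D to N Q satisfies f T = s (d h + h d) = s in
   degrees <= m.  By Dold-Kan, T extends to a simplicial map t, and since a
   simplicial map is determined in degrees <= m by its restriction to the Moore
   complex there, f t and s agree in degrees <= m, hence on the m-skeleton. *)

From HB Require Import structures.
From mathcomp Require Import all_boot all_order all_algebra zify.
From Stdlib Require Import ClassicalEpsilon.
Import GRing.Theory.
Local Open Scope ring_scope.

Section ZmodMorphism.
Context {U V : zmodType} {g : U -> V} (g_morph : zmod_morphism g).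
HB.instance Definition _ := GRing.isZmodMorphism.Build U V g g_morph.

Lemma zmod_morphism0 : g 0 = 0. Proof. exact: raddf0. Qed.
Lemma zmod_morphismD : {morph g : x y / x + y}. Proof. exact: raddfD. Qed.
Lemma zmod_morphismMz x n : g (x *~ n) = g x *~ n. Proof. exact: raddfMz. Qed.
Lemma zmod_morphism_sum I r (P : pred I) (F : I -> U) :
  g (\sum_(i <- r | P i) F i) = \sum_(i <- r | P i) g (F i).
Proof. exact: raddf_sum. Qed.
End ZmodMorphism.

Section FreeLift.
Context {I : eqType}.

Definition combo {V : zmodType} (b : I -> V) (l : seq (I * int)) :=
  \sum_(p <- l) b p.1 *~ p.2.
Definition coef (l : seq (I * int)) i := \sum_(p <- l) (if p.1 == i then p.2 else 0).
Definition opp_combo (l : seq (I * int)) := [seq (p.1, - p.2) | p <- l].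

Lemma combo_cat {V : zmodType} (b : I -> V) l1 l2 :
  combo b (l1 ++ l2) = combo b l1 + combo b l2.
Proof. by rewrite /combo big_cat. Qed.

Lemma combo_opp {V : zmodType} (b : I -> V) l : combo b (opp_combo l) = - combo b l.
Proof. by rewrite /combo big_map -sumrN; apply: eq_bigr => p _; rewrite mulrNz. Qed.

Lemma combo_coef {V : zmodType} (b : I -> V) l u :
  uniq u -> {subset map fst l <= u} -> combo b l = \sum_(i <- u) b i *~ coef l i.
Proof.
move=> u_uniq; elim: l => [|p l IHl] l_u.
  by rewrite /combo big_nil big1 // => i _; rewrite /coef big_nil.
have pu : p.1 \in u by apply: l_u; rewrite inE eqxx.
rewrite /combo big_cons -/(combo b l) IHl; last first.
  by move=> i il; apply: l_u; rewrite inE il orbT.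
rewrite /coef; under [RHS]eq_bigr do rewrite big_cons mulrzDr.
rewrite big_split /=; congr (_ + _).
rewrite (bigD1_seq p.1) //= eqxx big1 ?addr0 // => i.
by rewrite eq_sym => /negbTE ->; rewrite mulr0z.
Qed.

Lemma combo_indep_eq {V W : zmodType} (b : I -> V) (y : I -> W) :
  (forall (s : seq I) (c : I -> int), uniq s ->
     \sum_(i <- s) b i *~ c i = 0 -> forall i, i \in s -> c i = 0) ->
  forall l1 l2, combo b l1 = combo b l2 -> combo y l1 = combo y l2.
Proof.
move=> b_indep l1 l2 eq_b; set l := l1 ++ opp_combo l2.
have u_uniq : uniq (undup (map fst l)) by apply: undup_uniq.
have l_u : {subset map fst l <= undup (map fst l)} by move=> i; rewrite mem_undup.
have : combo b l = 0 by rewrite combo_cat combo_opp eq_b subrr.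
rewrite (combo_coef _ _ _ u_uniq l_u) => /(b_indep _ _ u_uniq) coef0.
apply/eqP; rewrite -subr_eq0 -combo_opp -combo_cat -/l (combo_coef _ _ _ u_uniq l_u).
by rewrite big_seq big1 // => i /coef0 ->; rewrite mulr0z.
Qed.
End FreeLift.

Lemma free_zmod_lift {V W Y : zmodType} {S : Y -> Prop} {r : V -> W} {p : Y -> W} :
  free_zmod V -> zmod_morphism r -> zmod_morphism p ->
  S 0 -> (forall a b, S a -> S b -> S (a - b)) ->
  (forall v, exists y, S y /\ p y = r v) ->
  exists H : V -> Y, [/\ zmod_morphism H, forall v, S (H v) & forall v, p (H v) = r v].
Proof.
move=> [I [b [b_span b_indep]]] r_morph p_morph S0 S_sub r_lifts.
pose y i := sval (constructive_indefinite_description _ (r_lifts (b i))).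
have [Sy py] : (forall i, S (y i)) /\ (forall i, p (y i) = r (b i)).
  by split=> i; case: (svalP (constructive_indefinite_description _ (r_lifts (b i)))).
have rep_ex v : exists l, v = combo b l.
  have [s [c ->]] := b_span v.
  by exists [seq (i, c i) | i <- s]; rewrite /combo big_map.
pose rep v := sval (constructive_indefinite_description _ (rep_ex v)).
have repE v : v = combo b (rep v) := svalP (constructive_indefinite_description _ (rep_ex v)).
have S_add a c : S a -> S c -> S (a + c).
  move=> Sa Sc; have -> : a + c = a - (0 - c) by rewrite sub0r opprK.
  by apply: (S_sub) => //; apply: (S_sub).
have S_mulz a n : S a -> S (a *~ n).
  have S_muln k : S a -> S (a *+ k).
    by move=> Sa; elim: k => [|k IHk]; rewrite ?mulrS //; apply: S_add.
  move=> Sa; case: n => n; first exact: S_muln.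
  by rewrite NegzE mulrNz -sub0r; apply: S_sub => //; apply: S_muln.
exists (fun v => combo y (rep v)); split.
- move=> v w; rewrite -combo_opp -combo_cat; apply: (combo_indep_eq _ _ b_indep).
  by rewrite combo_cat combo_opp -!repE.
- move=> v; rewrite /combo; elim: (rep v) => [|q l IHl]; rewrite ?big_nil ?big_cons //.
  by apply: (S_add) => //; apply: S_mulz.
- move=> v; rewrite [in RHS](repE v) /combo (zmod_morphism_sum r_morph).
  rewrite (zmod_morphism_sum p_morph); apply: eq_bigr => q _.
  by rewrite (zmod_morphismMz p_morph) (zmod_morphismMz r_morph) py.
Qed.

Section Moore.
Context {E : sAb}.

Lemma sface_morph {n i} : (i <= n.+1)%N -> zmod_morphism (sface E n i).
Proof. by move=> le_i x y; apply: sface_add. Qed.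

Lemma sdeg_morph {n i} : (i <= n)%N -> zmod_morphism (sdeg E n i).
Proof. by move=> le_i x y; apply: sdeg_add. Qed.

Lemma sface0 n i : (i <= n.+1)%N -> sface E n i 0 = 0.
Proof. by move/sface_morph/zmod_morphism0. Qed.

Lemma sdeg0 n i : (i <= n)%N -> sdeg E n i 0 = 0.
Proof. by move/sdeg_morph/zmod_morphism0. Qed.

Definition moore {n} (x : E n.+1) := forall i, (0 < i <= n.+1)%N -> sface E n i x = 0.

Lemma moore0 {n} : moore (0 : E n.+1).
Proof. by move=> i /andP[_ le_i]; rewrite sface0. Qed.

Lemma mooreB {n} (x y : E n.+1) : moore x -> moore y -> moore (x - y).
Proof. by move=> Nx Ny i /andP[i_gt0 le_i]; rewrite sface_add // Nx ?Ny ?subrr ?i_gt0. Qed.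

Lemma mooreD {n} (x y : E n.+1) : moore x -> moore y -> moore (x + y).
Proof.
move=> Nx Ny i /andP[i_gt0 le_i].
by rewrite (zmod_morphismD (sface_morph le_i)) Nx ?Ny ?addr0 ?i_gt0.
Qed.

Lemma moore_face0 {n} {y : E n.+2} : moore y -> moore (sface E n.+1 0 y).
Proof.
move=> Ny i /andP[i_gt0 le_i].
by rewrite -(sface_face _ _ 0 i.+1) // Ny ?sface0 //; lia.
Qed.

Lemma face0_face0_moore {n} {y : E n.+2} : moore y -> sface E n 0 (sface E n.+1 0 y) = 0.
Proof. by move=> Ny; rewrite -(sface_face _ _ 0 1) // Ny ?sface0. Qed.

Lemma cycle_face0_moore {n} {y : E n.+1} : moore y -> cycleN E n (sface E n 0 y).
Proof.
case: n y => [|n] y Ny //= i; case: i => [|i] le_i; first exact: face0_face0_moore.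
exact: (moore_face0 Ny i.+1).
Qed.

(* One step of the projection kills the face [d_(n-r+1)] while keeping the
   faces above it zero; [n + 1] steps land in the Moore complex. *)
Fixpoint mproj {n} r (x : E n.+1) : E n.+1 :=
  if r is r'.+1 then
    let y := mproj r' x in y - sdeg E n (n - r') (sface E n (n - r').+1 y)
  else x.

Definition mcoef {n} r (x : E n.+1) : E n := sface E n (n - r).+1 (mproj r x).

Definition mproj_dim {n} r : E n -> E n :=
  match n with 0 => id | n'.+1 => mproj (n := n') r end.

Definition mnorm n : E n -> E n := @mproj_dim n n.

Lemma mproj_morph n r : zmod_morphism (@mproj n r).
Proof.
elim: r => [|r IHr] x y //=.
have le_r : (n - r <= n)%N by rewrite leq_subr.
rewrite IHr (sface_morph _) // (sdeg_morph le_r).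
by rewrite !opprD !opprK addrACA.
Qed.

Lemma mcoef_morph n r : zmod_morphism (@mcoef n r).
Proof. by move=> x y; rewrite /mcoef mproj_morph (sface_morph _) // ltnS leq_subr. Qed.

Lemma mnorm_morph n : zmod_morphism (mnorm n).
Proof. by case: n => [|n] //; apply: mproj_morph. Qed.

Lemma face_deg_face_eq0 n i j (y : E n.+1) : (j.+1 < i)%N -> (i <= n.+1)%N ->
  sface E n i y = 0 -> sface E n i (sdeg E n j (sface E n j.+1 y)) = 0.
Proof.
case: n y => [|n] y lt_ji le_i yi0; first by move: (leq_trans lt_ji le_i).
rewrite sface_deg_gt // -(sface_face _ _ j.+1 i) // yi0 sface0 ?sdeg0 //; lia.
Qed.

Lemma mproj_face n r (x : E n.+1) i :
  (n.+1 - r < i <= n.+1)%N -> sface E n i (mproj r x) = 0.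
Proof.
elim: r i => [|r IHr] i /andP[lt_i le_i]; first by lia.
have le_r : (n - r <= n)%N by rewrite leq_subr.
rewrite /= (sface_morph le_i).
case: (ltngtP i (n - r).+1) => [|gt_i|->]; first by lia.
- rewrite face_deg_face_eq0 ?IHr ?subrr //; lia.
- by rewrite sface_deg_eqS // subrr.
Qed.

Lemma mnorm_moore {n} (x : E n.+1) : moore (mnorm n.+1 x).
Proof. by move=> i lt_i; apply: mproj_face; lia. Qed.

Lemma mproj_decomp {n} R (x : E n.+1) :
  x = mproj R x + \sum_(r < R) sdeg E n (n - r) (mcoef r x).
Proof.
elim: R => [|R IHR]; first by rewrite big_ord0 addr0.
by rewrite {1}IHR big_ord_recr /= /mcoef addrCA subrK addrC.
Qed.

Lemma mproj_id n r (x : E n.+1) : moore x -> mproj r x = x.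
Proof.
move=> Nx; elim: r => [|r IHr] //=.
by rewrite IHr Nx ?sdeg0 ?subr0 //; lia.
Qed.

Lemma mcoef_moore n r (x : E n.+1) : moore x -> mcoef r x = 0.
Proof. by move=> Nx; rewrite /mcoef mproj_id // Nx //; lia. Qed.

Lemma mnorm_id n (x : E n.+1) : moore x -> mnorm n.+1 x = x.
Proof. exact: mproj_id. Qed.

Lemma mproj_deg n j r z : (j <= n)%N -> (r <= n - j)%N ->
  mproj r (sdeg E n j z) = sdeg E n j (mproj_dim r z).
Proof.
case: n z j => [|n] z j le_j; first by rewrite sub0n leqn0 => /eqP ->.
elim: r => [|r IHr] le_r //=.
rewrite IHr; last by lia.
have -> : (n.+1 - r = (n - r).+1)%N by lia.
rewrite sface_deg_gt; [|lia|lia].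
by rewrite -sdeg_deg; [rewrite -(sdeg_morph _)|lia|lia].
Qed.

Lemma mproj_eq0_le n r r' (x : E n.+1) : (r <= r')%N -> mproj r x = 0 -> mproj r' x = 0.
Proof.
move=> /subnKC <- x0; elim: (r' - r)%N => [|k IHk]; first by rewrite addn0.
by rewrite addnS /= IHk sface0 ?sdeg0 ?subr0 //; lia.
Qed.

Lemma mproj_deg_eq0 n j r z : (j <= n)%N -> (n - j < r)%N ->
  mproj r (sdeg E n j z) = 0.
Proof.
move=> le_j /mproj_eq0_le; apply; rewrite /= mproj_deg //.
by rewrite (_ : (n - (n - j) = j)%N) ?sface_deg_eqS ?subrr //; lia.
Qed.
End Moore.

Section Naturality.
Context {E E' : sAb} {F : forall k, E k -> E' k} (F_morph : forall k, zmod_morphism (F k)).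

Definition simplicial_below n := forall k, (k < n)%N ->
  (forall i, (i <= k.+1)%N -> forall x, F k (sface E k i x) = sface E' k i (F k.+1 x)) /\
  (forall j, (j <= k)%N -> forall x, F k.+1 (sdeg E k j x) = sdeg E' k j (F k x)).

Lemma mproj_nat n r (x : E n.+1) : simplicial_below n.+1 ->
  F n.+1 (mproj r x) = mproj r (F n.+1 x).
Proof.
case/(_ n (ltnSn n)) => F_face F_deg; elim: r => [|r IHr] //=.
by rewrite F_morph F_deg ?F_face ?IHr //; lia.
Qed.

Lemma mproj_dim_nat n r (z : E n) : simplicial_below n ->
  F n (mproj_dim r z) = mproj_dim r (F n z).
Proof. by case: n z => [|n] z // F_simpl; apply: mproj_nat. Qed.

Lemma face_deg_nat n i k (w : E n) : simplicial_below n -> (k <= n)%N -> (i <= n.+1)%N ->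
  F n (sface E n i (sdeg E n k w)) = sface E' n i (sdeg E' n k (F n w)).
Proof.
move=> F_simpl le_k le_i.
case: (ltngtP i k) => [lt_ik|lt_ki|->]; last by rewrite !sface_deg_eq.
  case: n F_simpl w le_k le_i => [|n] F_simpl w le_k le_i; first by lia.
  have [F_face F_deg] := F_simpl n (ltnSn n).
  by rewrite !sface_deg_lt // F_deg ?F_face //; lia.
case: (ltngtP i k.+1) => [|lt_Ski|->]; [lia| |by rewrite !sface_deg_eqS].
case: n F_simpl w le_k le_i => [|n] F_simpl w le_k le_i; first by lia.
have [F_face F_deg] := F_simpl n (ltnSn n).
by rewrite !sface_deg_gt // F_deg ?F_face //; lia.
Qed.

Lemma mcoef_deg_nat n r j (z : E n) : simplicial_below n -> (j <= n)%N ->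
  F n (mcoef r (sdeg E n j z)) = mcoef r (sdeg E' n j (F n z)).
Proof.
move=> F_simpl le_j; rewrite /mcoef.
case: (ltngtP r (n - j)) => [lt_r|gt_r|eq_r].
- rewrite !mproj_deg; [|lia|lia|lia|lia].
  case: n F_simpl z le_j lt_r => [|n] F_simpl z le_j lt_r; first by lia.
  have [F_face F_deg] := F_simpl n (ltnSn n).
  rewrite !sface_deg_gt; [|lia|lia|lia|lia].
  rewrite F_deg ?F_face; [|lia|lia].
  by rewrite mproj_dim_nat // => k lt_k; apply: F_simpl; lia.
- by rewrite !mproj_deg_eq0 // !sface0 ?zmod_morphism0 //; lia.
- rewrite !mproj_deg; [|lia|lia|lia|lia].
  by rewrite (_ : (n - r = j)%N) ?sface_deg_eqS ?mproj_dim_nat //; lia.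
Qed.
End Naturality.
Arguments simplicial_below {E E'} F n.

Lemma hmap_morph {D E : sAb} (g : sHom D E) n : zmod_morphism (g n).
Proof. exact: hmap_add. Qed.

Lemma shom_simplicial {D E : sAb} (g : sHom D E) n : simplicial_below g n.
Proof. by move=> k _; split=> *; rewrite (hmap_face, hmap_deg). Qed.

Lemma hmap_mnorm {D E : sAb} (g : sHom D E) n (x : D n) :
  g n (mnorm n x) = mnorm n (g n x).
Proof.
by case: n x => [|n] x //; exact: (mproj_nat (hmap_morph g) _ _ _ (shom_simplicial g _)).
Qed.

Section MooreExtension.
Context {D Q : sAb} {T : forall k, D k -> Q k} (T_morph : forall k, zmod_morphism (T k))
  (T_moore : forall k (c : D k.+1), moore c -> moore (T k.+1 c))
  (T_chain : forall k (c : D k.+1), moore c -> sface Q k 0 (T k.+1 c) = T k (sface D k 0 c)).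

(* Dold-Kan: [x = mproj x + sum_r s_(n-r) (mcoef r x)] determines a simplicial
   map by its values on the Moore complex. *)
Fixpoint moore_ext n : D n -> Q n :=
  match n with
  | 0 => T 0
  | n'.+1 => fun x => T n'.+1 (mproj n'.+1 x) +
      \sum_(r < n'.+1) sdeg Q n' (n' - r) (moore_ext n' (mcoef r x))
  end.

Lemma moore_extS n (x : D n.+1) : moore_ext n.+1 x =
  T n.+1 (mproj n.+1 x) + \sum_(r < n.+1) sdeg Q n (n - r) (moore_ext n (mcoef r x)).
Proof. by []. Qed.

Lemma moore_ext_morph n : zmod_morphism (moore_ext n).
Proof.
elim: n => [|n IHn] x y; first exact: T_morph.
rewrite !moore_extS mproj_morph T_morph.
under eq_bigr do rewrite mcoef_morph IHn (sdeg_morph (leq_subr _ _)).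
by rewrite sumrB opprD addrACA.
Qed.

Lemma moore_ext_id n (c : D n.+1) : moore c -> moore_ext n.+1 c = T n.+1 c.
Proof.
move=> Nc; rewrite moore_extS mproj_id // big1 ?addr0 // => r _.
by rewrite mcoef_moore // zmod_morphism0 ?sdeg0 ?leq_subr //; apply: moore_ext_morph.
Qed.

Lemma moore_ext_face n : simplicial_below moore_ext n ->
  forall i, (i <= n.+1)%N -> forall x : D n.+1,
  moore_ext n (sface D n i x) = sface Q n i (moore_ext n.+1 x).
Proof.
move=> ext_simpl i le_i x.
rewrite {1}(mproj_decomp n.+1 x) moore_extS.
rewrite [in LHS](zmod_morphismD (sface_morph le_i)).
rewrite [in RHS](zmod_morphismD (sface_morph le_i)).
rewrite (zmod_morphismD (moore_ext_morph n)) !(zmod_morphism_sum (sface_morph le_i)).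
rewrite (zmod_morphism_sum (moore_ext_morph n)); congr (_ + _); last first.
  by apply: eq_bigr => r _; rewrite (face_deg_nat (F := moore_ext)) ?leq_subr.
have Nx : moore (mproj n.+1 x) := mnorm_moore x.
case: i le_i => [|i] le_i; last first.
  by rewrite Nx ?T_moore ?zmod_morphism0 //; apply: moore_ext_morph.
rewrite T_chain //; case: n ext_simpl x le_i Nx => [|n] // ext_simpl x le_i Nx.
by rewrite moore_ext_id //; apply: moore_face0.
Qed.

Lemma moore_ext_deg n : simplicial_below moore_ext n ->
  forall j, (j <= n)%N -> forall z : D n,
  moore_ext n.+1 (sdeg D n j z) = sdeg Q n j (moore_ext n z).
Proof.
move=> ext_simpl j le_j z.
rewrite moore_extS [RHS](mproj_decomp n.+1) !mproj_deg_eq0 ?zmod_morphism0 ?add0r //;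
  [|lia|lia].
by apply: eq_bigr => r _; rewrite (mcoef_deg_nat moore_ext_morph).
Qed.

Lemma moore_ext_simplicial n : simplicial_below moore_ext n.
Proof.
elim: n => [|n IHn] k; first by [].
rewrite ltnS leq_eqVlt => /predU1P[->|/IHn //].
by split; [apply: moore_ext_face | apply: moore_ext_deg].
Qed.
End MooreExtension.

Lemma moore_extension {D Q : sAb} {T : forall k, D k -> Q k} :
  (forall k, zmod_morphism (T k)) ->
  (forall k (c : D k.+1), moore c -> moore (T k.+1 c)) ->
  (forall k (c : D k.+1), moore c -> sface Q k 0 (T k.+1 c) = T k (sface D k 0 c)) ->
  exists g : sHom D Q, (forall x, g 0 x = T 0 x) /\
    forall n (c : D n.+1), moore c -> g n.+1 c = T n.+1 c.
Proof.
move=> T_morph T_moore T_chain.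
have ext_simpl n := moore_ext_simplicial T_morph T_moore T_chain n.+1 n (ltnSn n).
exists (SHom _ _ _ (moore_ext_morph T_morph)
  (fun n => proj1 (ext_simpl n)) (fun n => proj2 (ext_simpl n))).
by split=> // n c; apply: moore_ext_id.
Qed.

Definition shom_comp {D E F : sAb} (g : sHom E F) (h : sHom D E) : sHom D F.
Proof.
refine (@SHom D F (fun n x => g n (h n x)) _ _ _) => [n x y|n i le_i x|n i le_i x].
- by rewrite !hmap_add.
- by rewrite !hmap_face.
- by rewrite !hmap_deg.
Defined.

Lemma shom_eq_moore {D E : sAb} (g g' : sHom D E) m :
  (forall x, g 0 x = g' 0 x) ->
  (forall n (c : D n.+1), (n < m)%N -> moore c -> g n.+1 c = g' n.+1 c) ->
  forall n x, (n <= m)%N -> g n x = g' n x.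
Proof.
move=> eq0 eqS; elim=> [|n IHn] x le_nm //.
rewrite (mproj_decomp n.+1 x).
rewrite (zmod_morphismD (hmap_morph g _)) (zmod_morphismD (hmap_morph g' _)).
rewrite eqS //; last exact: mnorm_moore.
congr (_ + _).
rewrite !(zmod_morphism_sum (hmap_morph _ _)); apply: eq_bigr => r _.
by rewrite !hmap_deg ?leq_subr // IHn // ltnW.
Qed.

Lemma shom_eq_skel {D E : sAb} (g g' : sHom D E) m :
  (forall n x, (n <= m)%N -> g n x = g' n x) ->
  forall q (x : D q), in_skel D m q x -> g q x = g' q x.
Proof.
move=> eq_le q x; elim=> {q x} [q x le_qm|q i x le_i _ IHx|q i x le_i _ IHx].
- exact: eq_le.
- by rewrite !hmap_face // IHx.
- by rewrite !hmap_deg // IHx.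
Qed.

Section Contraction.
Context {D : sAb} {m : nat} (D_free : sfree D) (D_conn : sconnected m D).

Definition contracting k (h : D k -> D k.+1) :=
  [/\ zmod_morphism h, forall x, moore (h x) &
      (k <= m)%N -> forall c, cycleN D k c -> sface D k 0 (h c) = c].

Definition contraction_link {k} (hp : D k -> D k.+1) (h : D k.+1 -> D k.+2) :=
  forall c, moore c -> sface D k.+1 0 (h c) + hp (sface D k 0 c) = c.

Lemma contracting0 : exists h, contracting 0 h.
Proof.
have [h [h_morph h_moore h_id]] := free_zmod_lift (S := moore) (D_free 0) (fun _ _ => erefl)
  (sface_morph (leq0n 1)) moore0 mooreB (fun v => D_conn 0 (leq0n m) v I).
by exists h; split.
Qed.

Lemma contraction_step {k hp} : contracting k hp ->
  exists h, contracting k.+1 h /\ ((k < m)%N -> contraction_link hp h).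
Proof.
case=> hp_morph hp_moore hp_id; have [le_mk|lt_km] := leqP m k.
  exists (fun _ => 0); split=> [|lt_km]; last by lia.
  by split=> [x y|x|le_km]; [rewrite subrr | exact: moore0 | lia].
pose r x := mnorm k.+1 x - hp (sface D k 0 (mnorm k.+1 x)).
have r_morph : zmod_morphism r.
  move=> x y; rewrite /r mnorm_morph (sface_morph (leq0n _)) hp_morph.
  by rewrite !opprD !opprK addrACA.
have r_cycle x : cycleN D k.+1 (r x).
  case=> [|i] le_i; rewrite /r sface_add //.
    by rewrite hp_id ?subrr ?(ltnW lt_km) //; apply: cycle_face0_moore; apply: mnorm_moore.
  by rewrite mnorm_moore ?hp_moore ?subrr.
have [h [h_morph h_moore h_r]] := free_zmod_lift (S := moore) (D_free k.+1) r_morph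
  (sface_morph (leq0n _)) moore0 mooreB (fun v => D_conn k.+1 lt_km (r v) (r_cycle v)).
have link : contraction_link hp h by move=> c Nc; rewrite h_r /r mnorm_id // subrK.
exists h; split=> //; split=> // _ c c_cycle.
have Nc : moore c by move=> i /andP[_ le_i]; apply: c_cycle.
by rewrite -[RHS](link c Nc) c_cycle // zmod_morphism0 ?addr0.
Qed.

Definition contraction_next {k} (hp : {h | contracting k h}) :
  {h | contracting k.+1 h /\ ((k < m)%N -> contraction_link (sval hp) h)} :=
  constructive_indefinite_description _ (contraction_step (svalP hp)).

Fixpoint contraction k : {h : D k -> D k.+1 | contracting k h} :=
  match k with
  | 0 => constructive_indefinite_description _ contracting0
  | k'.+1 => let h := contraction_next (contraction k') in exist _ (sval h) (proj1 (svalP h))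
  end.

Lemma moore_contraction : exists h : forall k, D k -> D k.+1,
  [/\ forall k, zmod_morphism (h k), forall k x, moore (h k x),
      forall c, sface D 0 0 (h 0 c) = c &
      forall k, (k < m)%N -> contraction_link (h k) (h k.+1)].
Proof.
exists (fun k => sval (contraction k)); split.
- by move=> k; case: (svalP (contraction k)).
- by move=> k; case: (svalP (contraction k)).
- by case: (svalP (contraction 0)) => _ _ /(_ (leq0n m)) h_id c; apply: h_id.
- by move=> k; apply: (proj2 (svalP (contraction_next (contraction k)))).
Qed.
End Contraction.

Lemma shom_free_lift {D Q P : sAb} (s : sHom D P) (f : sHom Q P) :
  sfree D -> ssurj Q P f ->
  exists L : forall k, D k -> Q k,
    (forall k, zmod_morphism (L k)) /\ forall k x, f k (L k x) = s k x.
Proof.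
move=> D_free f_surj.
have lift k : exists Lk : D k -> Q k, zmod_morphism Lk /\ forall x, f k (Lk x) = s k x.
  have s_lifts v : exists y, True /\ f k y = s k v.
    by have [y fy] := f_surj k (s k v); exists y.
  have [Lk [Lk_morph _ fLk]] := free_zmod_lift (S := fun _ => True) (D_free k)
    (hmap_morph s k) (hmap_morph f k) I (fun _ _ _ _ => I) s_lifts.
  by exists Lk.
exists (fun k => sval (constructive_indefinite_description _ (lift k))).
by split=> k; case: (svalP (constructive_indefinite_description _ (lift k))).
Qed.

Section ChainMap.
Context {D Q P : sAb} {s : sHom D P} {f : sHom Q P} {m : nat}.
Context {h : forall k, D k -> D k.+1} {L : forall k, D k -> Q k}.
Context (h_morph : forall k, zmod_morphism (h k)) (h_moore : forall k x, moore (h k x))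
  (h0 : forall c, sface D 0 0 (h 0 c) = c)
  (h_link : forall k, (k < m)%N -> contraction_link (h k) (h k.+1))
  (L_morph : forall k, zmod_morphism (L k)) (fL : forall k x, f k (L k x) = s k x).

Definition lift_moore {k} (x : D k) : Q k := mnorm k (L k x).
Arguments lift_moore {k} x : simpl never.

Definition chain_map k : D k -> Q k :=
  match k with
  | 0 => fun c => sface Q 0 0 (lift_moore (h 0 c))
  | k'.+1 => fun c =>
      sface Q k'.+1 0 (lift_moore (h k'.+1 c)) + lift_moore (h k' (sface D k' 0 c))
  end.

Lemma lift_moore_morph k : zmod_morphism (@lift_moore k).
Proof. by move=> x y; rewrite /lift_moore L_morph mnorm_morph. Qed.

Lemma f_lift_moore k (c : D k.+1) : moore c -> f k.+1 (lift_moore c) = s k.+1 c.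
Proof. by move=> Nc; rewrite /lift_moore hmap_mnorm fL -hmap_mnorm mnorm_id. Qed.

Lemma chain_map_morph k : zmod_morphism (chain_map k).
Proof.
case: k => [|k] x y /=.
  by rewrite h_morph lift_moore_morph (sface_morph (leq0n _)).
rewrite h_morph lift_moore_morph (sface_morph (leq0n _)) (sface_morph (leq0n _)).
by rewrite h_morph lift_moore_morph [in RHS]opprD addrACA.
Qed.

Lemma chain_map_moore k (c : D k.+1) : moore (chain_map k.+1 c).
Proof. by apply: mooreD; [apply: moore_face0 |]; apply: mnorm_moore. Qed.

Lemma chain_map_chain k (c : D k.+1) : moore c ->
  sface Q k 0 (chain_map k.+1 c) = chain_map k (sface D k 0 c).
Proof.
move=> Nc /=; rewrite (zmod_morphismD (sface_morph (leq0n _))).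
rewrite face0_face0_moore ?add0r; last exact: mnorm_moore.
case: k c Nc => [|k] c Nc //=.
rewrite face0_face0_moore // (zmod_morphism0 (h_morph k)).
by rewrite (zmod_morphism0 (lift_moore_morph k.+1)) addr0.
Qed.

Lemma f_chain_map0 c : f 0 (chain_map 0 c) = s 0 c.
Proof. by rewrite /= hmap_face // f_lift_moore // -hmap_face // h0. Qed.

Lemma f_chain_mapS k (c : D k.+1) : (k < m)%N -> moore c ->
  f k.+1 (chain_map k.+1 c) = s k.+1 c.
Proof.
move=> lt_km Nc /=; rewrite (zmod_morphismD (hmap_morph f _)) hmap_face //.
rewrite !f_lift_moore // -hmap_face // -(zmod_morphismD (hmap_morph s _)).
by rewrite h_link.
Qed.
End ChainMap.

Theorem mainTheorem8 (D Q P : sAb) (s : sHom D P) (f : sHom Q P) (m : nat) :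
  sfree D -> sconnected m D -> ssurj Q P f ->
  exists t : sHom D Q,
    forall q (x : D q), in_skel D m q x -> f q (t q x) = s q x.
Proof.
move=> D_free D_conn f_surj.
have [h [h_morph h_moore h0 h_link]] := moore_contraction D_free D_conn.
have [L [L_morph fL]] := shom_free_lift s f D_free f_surj.
have [t [t0 tS]] := moore_extension (chain_map_morph h_morph L_morph)
  (fun k c _ => chain_map_moore k c) (chain_map_chain h_morph L_morph).
exists t; apply: (shom_eq_skel (shom_comp f t) s) => n x le_nm.
apply: (shom_eq_moore (shom_comp f t) s) le_nm => [y|k c lt_km Nc] /=.
- by rewrite t0; apply: (f_chain_map0 h_moore h0 fL).
- by rewrite tS //; apply: (f_chain_mapS h_moore h_link fL).
Qed.
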